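(* Let $\Gamma$ be a finite group, let $\mathcal{S}_\Gamma$ be a Schur ring over $\Gamma$ with basis $\mathcal{B}[\mathcal{S}_\Gamma]$, and let $\gamma \in \Gamma$ have odd order $n$. Let $r$ and $t$ be integers such that $r - t$ is relatively prime to $n$. If $\gamma^r + \gamma^t$ is an element of $\mathcal{B}[\mathcal{S}_\Gamma]$, then $\gamma^s + \gamma^{-s}$ is also an element of $\mathcal{B}[\mathcal{S}_\Gamma]$ for every integer $s$ relatively prime to $n$.
   Context: For a subset $X \subseteq \Gamma$ write $\overline{X} = \sum_{x \in X} x \in \mathbb{Z}[\Gamma]$ (a ''simple quantity''), and $X^{-1} = \{x^{-1} : x \in X\}$. A Schur ring over $\Gamma$ is a subring $\mathcal{S}$ of the group ring $\mathbb{Z}[\Gamma]$, closed under addition, multiplication and multiplication by integers, for which there is a partition $\{B_0, B_1, \dots, B_{r-1}\}$ of $\Gamma$ with $B_0 = \{1\}$ such that every element of $\mathcal{S}$ has a unique representation $\sum_{i} \beta_i \overline{B}_i$ with integer coefficients, $\sum_i \overline{B}_i = \overline{\Gamma}$, and for each $i$ there is $j$ with $\overline{B}_j = \overline{B_i^{-1}}$. The set $\{\overline{B}_0, \dots, \overline{B}_{r-1}\}$ is the basis $\mathcal{B}[\mathcal{S}]$ of the Schur ring, and its members are the basic elements. Thus ''$\gamma^r + \gamma^t \in \mathcal{B}[\mathcal{S}_\Gamma]$'' means $\{\gamma^r, \gamma^t\}$ is one of the basic sets. *)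

From mathcomp Require Import all_boot all_order all_algebra all_fingroup.
Set Implicit Arguments. Unset Strict Implicit. Unset Printing Implicit Defensive.
Import GRing.Theory Num.Theory.
Local Open Scope ring_scope.
Local Open Scope group_scope.

(* Elements of the group ring Z[G] are represented as coefficient functions
   G -> int (an element sum_g a_g g is the function g |-> a_g). *)
Definition grpring (gT : finGroupType) := gT -> int.

Definition simpleq (gT : finGroupType) (X : {set gT}) : grpring gT :=
  fun g => ((g \in X) : nat)%:Z.

Definition grmul (gT : finGroupType) (f h : grpring gT) : grpring gT :=
  fun g => (\sum_(x : gT) f x * h ((x^-1 * g)%g))%R.

Definition in_span (gT : finGroupType) (P : {set {set gT}}) (f : grpring gT) :=
  exists c : {set gT} -> int,
    forall g, f g = (\sum_(B in P) c B * simpleq B g)%R.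

(* P is the basis partition of a Schur ring over gT: P partitions gT with
   {1} a block, is closed under inversion of blocks, and the Z-span of the
   simple quantities of the blocks (which contains 1 = \overline{\{1\}},
   is closed under addition and integer multiples, and in which
   representations are unique since the blocks are disjoint and nonempty)
   is closed under multiplication; by bilinearity, the latter is equivalent
   to products of basic elements lying in the span. *)
Definition schur_basis (gT : finGroupType) (P : {set {set gT}}) : Prop :=
  [/\ partition P [set: gT],
      [set 1] \in P,
      (forall B, B \in P -> B^-1 \in P) &
      (forall B C, B \in P -> C \in P -> in_span P (grmul (simpleq B) (simpleq C)))].

Definition expgz (gT : finGroupType) (x : gT) (z : int) : gT :=
  match z with
  | Posz n => x ^+ n
  | Negz n => (x ^+ n.+1)^-1
  end.

From mathcomp Require Import all_boot all_order all_algebra all_fingroup all_solvable.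
Set Implicit Arguments. Unset Strict Implicit. Unset Printing Implicit Defensive.
Import GRing.Theory.
Local Open Scope ring_scope.
Local Open Scope group_scope.

(* Let x = gamma^(r-t) = a b^-1 with a = gamma^r, b = gamma^t; x generates
   <gamma>.  The elements of the Schur ring are the functions constant on the
   basic sets.  Since {a,b} {a,b}^-1 = 2 + x + x^-1, the ring contains
   x + x^-1, and by the recursion
   (x + x^-1)(x^(j+1) + x^-(j+1)) = (x^(j+2) + x^-(j+2)) + (x^j + x^-j)
   it contains every x^j + x^-j.  Hence the basic set of y = gamma^s lies in
   {y, y^-1}.  Were it {y}, all powers of y, x among them, would form
   singleton basic sets; then x {a, b} = {x a, a} is a union of basic sets
   meeting {a, b}, which forces x^2 = 1, impossible in odd order n > 1. *)

Section GroupRing.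
Variable gT : finGroupType.
Implicit Types (z g : gT) (h : grpring gT).

Definition symq z : grpring gT :=
  fun g => (g == z : nat)%:Z + (g == z^-1 : nat)%:Z.

Lemma grmul_simpleql (A : {set gT}) h g :
  grmul (simpleq A) h g = (\sum_(u in A) h (u^-1 * g)%g)%R.
Proof.
rewrite /grmul /simpleq [RHS]big_mkcond /=; apply: eq_bigr => u _.
by case: (u \in A); rewrite ?mul1r ?mul0r.
Qed.

Lemma grmul_set1l z h g : grmul (simpleq [set z]) h g = h (z^-1 * g).
Proof. by rewrite grmul_simpleql big_set1. Qed.

Lemma grmul_symql z h g : grmul (symq z) h g = h (z^-1 * g) + h (z * g).
Proof.
have pointl y : (\sum_u (u == y : nat)%:Z * h (u^-1 * g)%g)%R = h (y^-1 * g).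
  rewrite (bigD1 y) //= eqxx mul1r big1 ?addr0 // => u /negbTE->.
  by rewrite mul0r.
by rewrite /grmul; under eq_bigr do rewrite mulrDl; rewrite big_split /= !pointl invgK.
Qed.

Lemma grmul_set2_inv a b g : a != b ->
  grmul (simpleq [set a; b]) (simpleq [set a; b]^-1) g =
  symq 1 g + symq (a * b^-1) g.
Proof.
move=> neq_ab; rewrite grmul_simpleql big_setU1 ?inE //= big_set1 /simpleq /symq.
have shift u v : (u^-1 * g)^-1 == v = (g == u * v^-1).
  by apply/eqP/eqP => [<- | ->]; rewrite !invMg !invgK ?mulKVg ?mulgKV.
rewrite !mem_invg !inE !shift !mulgV invg1 invMg invgK.
have [->|_] := eqVneq g 1; last by case: (g == _); case: (g == _).
by rewrite ![1 == _]eq_sym -!eq_mulgV1 (negbTE neq_ab) eq_sym (negbTE neq_ab).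
Qed.

Lemma symq_expg_rec x m g :
  grmul (symq x) (symq (x ^+ m.+1)) g = symq (x ^+ m.+2) g + symq (x ^+ m) g.
Proof.
rewrite grmul_symql /symq.
have e1 : (x^-1 * g == x ^+ m.+1) = (g == x ^+ m.+2).
  by rewrite (expgS x m.+1); apply/eqP/eqP => [<- | ->]; rewrite ?mulKVg ?mulKg.
have e2 : (x^-1 * g == (x ^+ m.+1)^-1) = (g == (x ^+ m)^-1).
  by rewrite expgSr invMg; apply/eqP/eqP => [/(mulgI x^-1) | ->].
have e3 : (x * g == x ^+ m.+1) = (g == x ^+ m).
  by rewrite expgS; apply/eqP/eqP => [/(mulgI x) | ->].
have e4 : (x * g == (x ^+ m.+1)^-1) = (g == (x ^+ m.+2)^-1).
  by rewrite (expgSr x m.+1) invMg; apply/eqP/eqP => [<- | ->]; rewrite ?mulKg ?mulKVg.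
by rewrite e1 e2 e3 e4 addrACA [RHS]addrACA [X in _ = _ + X]addrC.
Qed.

End GroupRing.

Section BlockConstant.
Variables (gT : finGroupType) (P : {set {set gT}}).
Hypothesis partP : partition P [set: gT].

Definition block_const (f : grpring gT) :=
  forall g h, h \in pblock P g -> f g = f h.

Let trivP : trivIset P. Proof. by case/and3P: partP. Qed.

Let covP : cover P = [set: gT]. Proof. by case/and3P: partP => /eqP. Qed.
Let pblock_id g : g \in pblock P g. Proof. by rewrite mem_pblock covP inE. Qed.
Let pblockP g : pblock P g \in P. Proof. by rewrite pblock_mem ?covP ?inE. Qed.

Lemma simpleq_pblock B g : B \in P -> simpleq B g = (B == pblock P g : nat)%:Z.
Proof.
move=> PB; rewrite /simpleq; congr (Posz (nat_of_bool _)).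
apply/idP/eqP => [gB | ->]; first by rewrite (def_pblock trivP PB gB).
exact: pblock_id.
Qed.

Lemma sum_simpleq_pblock (c : {set gT} -> int) g :
  \sum_(B in P) c B * simpleq B g = c (pblock P g).
Proof.
rewrite (bigD1 (pblock P g)) //= simpleq_pblock // eqxx mulr1.
rewrite big1 ?addr0 // => B /andP[PB /negbTE nB].
by rewrite simpleq_pblock // nB mulr0.
Qed.

Lemma in_spanP f : in_span P f <-> block_const f.
Proof.
split=> [[c Df] g h hg | fP].
  by rewrite !Df !sum_simpleq_pblock (same_pblock trivP hg).
exists (fun B => f (repr B)) => g; rewrite sum_simpleq_pblock.
by apply: fP; apply: mem_repr (pblock_id g).
Qed.

Lemma block_const_simpleq B : B \in P -> block_const (simpleq B).
Proof.
by move=> PB g h hg; rewrite !simpleq_pblock // (same_pblock trivP hg).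
Qed.

Lemma block_const_eq f f' : block_const f -> f =1 f' -> block_const f'.
Proof. by move=> fP eqf g h hg; rewrite -!eqf; apply: fP. Qed.

Lemma block_constD f f' :
  block_const f -> block_const f' -> block_const (fun g => f g + f' g)%R.
Proof. by move=> fP f'P g h hg; rewrite (fP _ _ hg) (f'P _ _ hg). Qed.

Lemma block_constB f f' :
  block_const f -> block_const f' -> block_const (fun g => f g - f' g)%R.
Proof. by move=> fP f'P g h hg; rewrite (fP _ _ hg) (f'P _ _ hg). Qed.

Lemma block_const_set1 z : block_const (simpleq [set z]) -> [set z] \in P.
Proof.
move=> zP; suff <- : pblock P z = [set z] by [].
apply/setP => h; rewrite in_set1; apply/idP/eqP => [hz | ->]; last exact: pblock_id.
by move: (zP _ _ hz); rewrite /simpleq !in_set1 eqxx; case: eqP.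
Qed.

Lemma block_const_symq_cases z :
  block_const (symq z) -> [set z; z^-1] \in P \/ [set z] \in P.
Proof.
move=> zP.
have sub_z h : h \in pblock P z -> (h == z) || (h == z^-1).
  by move/(zP z h); rewrite /symq eqxx; case: (h == z); case: (h == z^-1).
have [zi_z | zi_nz] := boolP (z^-1 \in pblock P z); [left | right].
  suff <- : pblock P z = [set z; z^-1] by [].
  apply/setP => h; rewrite !inE; apply/idP/idP => [/sub_z // | /orP[]/eqP-> //].
suff <- : pblock P z = [set z] by [].
apply/setP => h; rewrite inE; apply/idP/eqP => [hz | ->]; last exact: pblock_id.
by case/orP: (sub_z h hz) => /eqP // hzi; rewrite -hzi hz in zi_nz.
Qed.

End BlockConstant.

Lemma odd_order_expg2_eq1 (gT : finGroupType) (z : gT) :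
  odd #[z] -> z ^+ 2 = 1 -> z = 1.
Proof.
move=> odd_z /eqP; rewrite -order_dvdn => /(dvdn_leq (isT : 0 < 2)%N) le_z2.
by apply/eqP; rewrite -order_eq1; move: odd_z le_z2; case: #[z] => [|[|[]]].
Qed.

Section SchurRing.
Variables (gT : finGroupType) (P : {set {set gT}}).
Hypothesis schurP : schur_basis P.

Let partP : partition P [set: gT]. Proof. by case: schurP. Qed.
Let trivP : trivIset P. Proof. by case/and3P: partP. Qed.
Let set1_1P : [set 1] \in P. Proof. by case: schurP. Qed.
Local Notation block_const := (block_const P).

Lemma block_const_grmul f h :
  block_const f -> block_const h -> block_const (grmul f h).
Proof.
move=> /(in_spanP partP)[c Df] /(in_spanP partP)[d Dh].
have mulP B C : B \in P -> C \in P -> block_const (grmul (simpleq B) (simpleq C)).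
  by case: schurP => _ _ _ mulP PB PC; apply/(in_spanP partP)/mulP.
have Dfh g : grmul f h g = (\sum_(B in P) \sum_(C in P)
                              c B * d C * grmul (simpleq B) (simpleq C) g)%R.
  rewrite /grmul; under eq_bigr => y _ do rewrite Df Dh big_distrlr /=.
  rewrite exchange_big /=; apply: eq_bigr => B _.
  rewrite exchange_big /=; apply: eq_bigr => C _.
  by rewrite mulr_sumr; apply: eq_bigr => y _; rewrite mulrACA.
move=> g g' gg'; rewrite !Dfh; apply: eq_bigr => B PB; apply: eq_bigr => C PC.
by rewrite (mulP _ _ PB PC _ _ gg').
Qed.

Lemma set1M y z : [set y] \in P -> [set z] \in P -> [set y * z] \in P.
Proof.
move=> Py Pz; apply: (block_const_set1 partP).
apply: (block_const_eq (block_const_grmul (block_const_simpleq partP Py)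
                                           (block_const_simpleq partP Pz))) => g.
rewrite grmul_set1l /simpleq !in_set1; congr (Posz (nat_of_bool _)).
by apply/eqP/eqP => [<- | ->]; rewrite ?mulKVg ?mulKg.
Qed.

Lemma set1_cycle y x : [set y] \in P -> x \in <[y]> -> [set x] \in P.
Proof.
move=> Py /cycleP[k ->]; elim: k => [|k IHk]; first by rewrite expg0.
by rewrite expgS set1M.
Qed.

Lemma block_const_symq_expg a b : a != b -> [set a; b] \in P ->
  forall j, block_const (symq ((a * b^-1) ^+ j)).
Proof.
move=> neq_ab Pab; set x := a * b^-1.
have Pab_inv : [set a; b]^-1 \in P by case: schurP => _ _ invP _; apply: invP.
have symq1 : block_const (symq 1).
  apply: (block_const_eq (block_constD (block_const_simpleq partP set1_1P)
                                       (block_const_simpleq partP set1_1P))) => g.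
  by rewrite /symq /simpleq invg1 in_set1.
have symqx : block_const (symq x).
  apply: (block_const_eq (block_constB (block_const_grmul
            (block_const_simpleq partP Pab) (block_const_simpleq partP Pab_inv)) symq1)) => g.
  by rewrite grmul_set2_inv // [symq 1 g + _]addrC addrK.
suff symq2 j : block_const (symq (x ^+ j)) /\ block_const (symq (x ^+ j.+1)).
  by move=> j; case: (symq2 j).
elim: j => [|j [IHj IHj1]]; first by rewrite expg0 expg1.
split=> //; apply: (block_const_eq (block_constB (block_const_grmul symqx IHj1) IHj)) => g.
by rewrite symq_expg_rec addrK.
Qed.

Lemma set2_set1_expg2 a b :
  [set a; b] \in P -> [set a * b^-1] \in P -> (a * b^-1) ^+ 2 = 1.
Proof.
move=> Pab Px; set x := a * b^-1 in Px *.
(* The indicator of [x {a, b}] is constant on blocks and equals 1 at [a = x b]. *)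
have b_ab : b \in pblock P a by rewrite (def_pblock trivP Pab (set21 a b)) set22.
move: (block_const_grmul (block_const_simpleq partP Px) (block_const_simpleq partP Pab) b_ab).
rewrite !grmul_set1l /simpleq.
have -> : x^-1 * a = b by rewrite /x invMg invgK mulgKV.
rewrite set22; case/boolP: (x^-1 * b \in _) => // /set2P[] bx _.
  have xV : x^-1 = x by apply: (mulIg b); rewrite bx /x mulgKV.
  by rewrite expgS expg1 -{1}xV mulVg.
have /eqP : x^-1 = 1 by apply: (mulIg b); rewrite bx mul1g.
by rewrite eq_invg1 => /eqP ->; rewrite expg1n.
Qed.

Lemma set2_inv_block a b y : odd #[a * b^-1] -> <[y]> = <[a * b^-1]> ->
  [set a; b] \in P -> [set y; y^-1] \in P.
Proof.
move=> odd_x cyc_y Pab; set x := a * b^-1 in odd_x cyc_y *.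
have [x1 | ntx] := eqVneq x 1.
  have /eqP -> : y == 1 by rewrite -cycle_eq1 cyc_y x1 cycle1.
  by rewrite invg1 setUid.
have neq_ab : a != b by apply: contraNneq ntx => eq_ab; rewrite /x eq_ab mulgV.
have /cycleP[k Dy] : y \in <[x]> by rewrite -cyc_y cycle_id.
rewrite Dy; case: (block_const_symq_cases partP (block_const_symq_expg neq_ab Pab k)) => // Py.
rewrite -Dy in Py.
have Px : [set x] \in P by apply: (set1_cycle Py); rewrite cyc_y cycle_id.
by case/eqP: ntx; apply: odd_order_expg2_eq1 odd_x (set2_set1_expg2 Pab Px).
Qed.

End SchurRing.

Section IntegerPowers.
Variables (gT : finGroupType) (g : gT).

Let absz_modz_order z : (`|(z %% #[g])%Z|%N)%:Z = (z %% #[g])%Z.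
Proof. by rewrite gez0_abs // modz_ge0 // -lt0n order_gt0. Qed.

Lemma expgz_mod z : expgz g z = g ^+ `|(z %% #[g])%Z|%N.
Proof.
case: z => m /=; first by rewrite modz_nat absz_nat expg_mod_order.
set k := `|_|%N.
have : (#[g]%:Z %| k%:Z - Negz m)%Z.
  by rewrite absz_modz_order -eqz_mod_dvd modz_mod.
rewrite NegzE opprK -PoszD dvdzE !absz_nat order_dvdn expgD => gkm.
by apply/eqP; rewrite eq_invg_mul -expgD addnC expgD.
Qed.

Lemma expgzN z : expgz g (- z)%R = (expgz g z)^-1.
Proof. by case: z => [[|m]|m] //=; rewrite ?invg1 ?invgK. Qed.

Lemma expgzD u v : expgz g (u + v)%R = expgz g u * expgz g v.
Proof.
rewrite !expgz_mod -expgD; apply/eqP; rewrite eq_expg_mod_order -eqz_nat.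
by rewrite -!modz_nat PoszD !absz_modz_order modz_mod modzDm.
Qed.

Lemma cycle_expgz z : coprimez z #[g] -> <[expgz g z]> = <[g]>.
Proof.
move=> cop_z; apply/esym/eqP; change (generator <[g]> (expgz g z)).
rewrite expgz_mod generator_coprime coprime_sym.
by move: cop_z; rewrite /coprimez -gcdz_modl -/(coprimez _ _) coprimezE absz_nat.
Qed.

End IntegerPowers.

Theorem lemma2p1 (gT : finGroupType) (P : {set {set gT}}) (gamma : gT)
    (r t : int) :
  schur_basis P ->
  odd #[gamma] ->
  coprimez (r - t)%R #[gamma] ->
  [set expgz gamma r; expgz gamma t] \in P ->
  forall s : int, coprimez s #[gamma] ->
    [set expgz gamma s; expgz gamma (- s)%R] \in P.
Proof.
move=> schurP odd_gamma cop_rt Pab s cop_s.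
have cyc_x : <[expgz gamma r * (expgz gamma t)^-1]> = <[gamma]>.
  by rewrite -expgzN -expgzD cycle_expgz.
rewrite expgzN; apply: (set2_inv_block schurP _ _ Pab).
  by rewrite orderE cyc_x -orderE.
by rewrite cyc_x cycle_expgz.
Qed.
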